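(* Let $x\in(0,\pi/2)$ and $p,q\in\mathbb{R}$. (i) If $q\ge 1$ and $p\le 3q-\frac85$, then \[ \left(\tfrac{2}{\pi}\right)^{p}+\left(1-\left(\tfrac{2}{\pi}\right)^{p}\right)\cos^{q}x<\left(\tfrac{\sin x}{x}\right)^{p}<1-\tfrac{p}{3q}+\tfrac{p}{3q}\cos^{q}x \quad\text{if } p>0, \] \[ \left(\tfrac{2}{\pi}\right)^{1-\cos^{q}x}<\tfrac{\sin x}{x}<\exp\tfrac{\cos^{q}x-1}{3q}\quad\text{if } p=0, \] \[ 1-\tfrac{p}{3q}+\tfrac{p}{3q}\cos^{q}x<\left(\tfrac{\sin x}{x}\right)^{p}<\left(\tfrac{2}{\pi}\right)^{p}+\left(1-\left(\tfrac{2}{\pi}\right)^{p}\right)\cos^{q}x\quad\text{if } p<0, \] and the constants $\frac13$ and $\kappa_{p,q}$ are best possible, where $\kappa_{p,q}=\frac{q}{p}\left(1-\left(\frac{2}{\pi}\right)^p\right)$ for $p\neq 0$ and $\kappa_{0,q}=q\ln\frac{\pi}{2}$. (Equivalently, these inequalities say $\frac13 U_q(\cos x)<U_p(\frac{\sin x}{x})<\kappa_{p,q}U_q(\cos x)$, and $\frac13$ cannot be replaced by a larger constant nor $\kappa_{p,q}$ by a smaller one.) (ii) If $\frac{34}{35}<q\le 1$ and $p\ge \frac{\pi^2}{4}-1$, then the double inequality stated in (i) for $p>0$ holds with both inequality signs reversed. (iii) If $0<q\le \frac{34}{35}$ and $p\ge 3q-\frac85$, then all three double inequalities stated in (i) (for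 $p>0$, $p=0$, $p<0$) hold with all inequality signs reversed. (iv) If $q\le 0$ and $p\ge 3q-\frac85$, then \[ \left(\tfrac{\sin x}{x}\right)^{p}>1-\tfrac{p}{3q}+\tfrac{p}{3q}\cos^{q}x \text{ if } p>0,\quad \tfrac{\sin x}{x}>\exp\tfrac{\cos^{q}x-1}{3q}\text{ if } p=0,\quad \left(\tfrac{\sin x}{x}\right)^{p}<1-\tfrac{p}{3q}+\tfrac{p}{3q}\cos^{q}x\text{ if } p<0, \] where $\frac13$ is the best constant.
   Context: For $t\in(0,1)$ and $p\in\mathbb{R}$ let $U_p(t)=\frac{1-t^p}{p}$ if $p\ne0$ and $U_0(t)=-\ln t$. When $q=0$, expressions of the form $\frac{1-u^q}{q}$ are interpreted as their limit $-\ln u$; thus $1-\frac{p}{3q}+\frac{p}{3q}\cos^q x$ means $1+\frac p3\ln\cos x$ and $\exp\frac{\cos^q x-1}{3q}$ means $(\cos x)^{1/3}$ when $q=0$. ''Best constant'' refers to the constant $c$ in bounds of the form $1-\frac{p}{q}c+\frac{p}{q}c\cos^q x$ (resp. $\exp(c\frac{\cos^q x-1}{q})$ for $p=0$), i.e. to $c$ in $U_p(\frac{\sin x}{x})\lessgtr c\,U_q(\cos x)$. *)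

From Stdlib Require Import Reals.
Open Scope R_scope.

Definition U (p t : R) : R :=
  if Req_EM_T p 0 then - ln t else (1 - Rpower t p) / p.

Definition kappa (p q : R) : R :=
  if Req_EM_T p 0 then q * ln (PI / 2) else q / p * (1 - Rpower (2 / PI) p).

Definition third_bound (p q x : R) : R :=
  if Req_EM_T q 0 then 1 + p / 3 * ln (cos x)
  else 1 - p / (3 * q) + p / (3 * q) * Rpower (cos x) q.

Definition third_bound0 (q x : R) : R :=
  if Req_EM_T q 0 then Rpower (cos x) (1 / 3)
  else exp ((Rpower (cos x) q - 1) / (3 * q)).

Definition kappa_bound (p q x : R) : R :=
  Rpower (2 / PI) p + (1 - Rpower (2 / PI) p) * Rpower (cos x) q.

Definition kappa_bound0 (q x : R) : R :=
  Rpower (2 / PI) (1 - Rpower (cos x) q).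

Definition sinc (x : R) : R := sin x / x.

From Stdlib Require Import Reals Lra Psatz.
From Coquelicot Require Import Coquelicot.
Open Scope R_scope.

(* With f(x) = U_p(sin x / x) and g(x) = U_q(cos x), both f and g tend to 0 as x -> 0+,
   g' > 0, and f'/g' = m(x) = (sin x / x)^(p-1) cos^(1-q) x (sin x - x cos x) / (x^2 sin x),
   which tends to 1/3. The logarithmic derivative of m is
   G(x) = (2-p) v + (q-1) tan x + 1/v - 3/x,  where v = 1/x - cot x,
   and elementary inequalities between v, tan x and 1/x (two of them certified by Taylor bounds
   of sin and cos) fix the sign of G under each set of hypotheses. A monotone l'Hopital rule then
   makes f/g strictly monotone on (0, pi/2), strictly between its limits 1/3 at 0 and kappa_{p,q}
   at pi/2 (when q > 0). This gives the inequalities between U_p(sin x / x) and U_q(cos x) as well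
   as the optimality of the constants, and inverting U_p yields the power forms. *)

(** * Monotonicity and one-sided limits *)

Definition strict_incr_on (a b : R) (h : R -> R) : Prop :=
  forall y z, a < y -> y < z -> z < b -> h y < h z.

Lemma lt_of_deriv_pos h h' a b : a < b ->
  (forall y, a <= y <= b -> derivable_pt_lim h y (h' y)) ->
  (forall y, a < y < b -> 0 < h' y) -> h a < h b.
Proof.
  intros Hab Hd Hpos.
  destruct (MVT_cor2 h h' a b Hab Hd) as [c [Hc Hcab]].
  assert (0 < h' c * (b - a)) by (apply Rmult_lt_0_compat; [apply Hpos |]; lra). lra.
Qed.

Lemma pos_of_deriv_pos h h' b : h 0 = 0 ->
  (forall y, 0 <= y <= b -> derivable_pt_lim h y (h' y)) ->
  (forall y, 0 < y < b -> 0 < h' y) -> forall x, 0 < x <= b -> 0 < h x.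
Proof.
  intros H0 Hd Hpos x Hx. rewrite <- H0.
  apply (lt_of_deriv_pos h h'); [lra | intros y Hy; apply Hd; lra | intros y Hy; apply Hpos; lra].
Qed.

Lemma strict_incr_of_deriv h h' a b :
  (forall y, a < y < b -> derivable_pt_lim h y (h' y)) ->
  (forall y, a < y < b -> 0 < h' y) -> strict_incr_on a b h.
Proof.
  intros Hd Hpos y z Hy Hyz Hz.
  apply (lt_of_deriv_pos h h'); [exact Hyz | intros w Hw; apply Hd; lra |].
  intros w Hw. apply Hpos. lra.
Qed.

Lemma at_right_interval a b : a < b -> at_right a (fun x => a < x < b).
Proof.
  intros Hab. exists (mkposreal _ (proj2 (Rlt_0_minus _ _) Hab)). intros x Hx Hax.
  apply Rabs_lt_between' in Hx. simpl in Hx. lra.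
Qed.

Lemma at_left_interval a b : a < b -> at_left b (fun x => a < x < b).
Proof.
  intros Hab. exists (mkposreal _ (proj2 (Rlt_0_minus _ _) Hab)). intros x Hx Hxb.
  apply Rabs_lt_between' in Hx. simpl in Hx. lra.
Qed.

Lemma filterlim_comp_continuity {T} (F : (T -> Prop) -> Prop) (u : T -> R) h l :
  filterlim u F (locally l) -> continuity_pt h l -> filterlim (fun y => h (u y)) F (locally (h l)).
Proof. intros Hu Hh. eapply filterlim_comp; [exact Hu | now apply continuity_pt_filterlim]. Qed.

Lemma filterlim_at_right_of_continuity h x : continuity_pt h x ->
  filterlim h (at_right x) (locally (h x)).
Proof.
  intros Hh. apply (filterlim_filter_le_1 (F := locally x) _ (filter_le_within (F := locally x) _)).
  now apply continuity_pt_filterlim.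
Qed.

Lemma filterlim_at_left_of_continuity h x : continuity_pt h x ->
  filterlim h (at_left x) (locally (h x)).
Proof.
  intros Hh. apply (filterlim_filter_le_1 (F := locally x) _ (filter_le_within (F := locally x) _)).
  now apply continuity_pt_filterlim.
Qed.

Lemma filterlim_at_right_of_above {T} (F : (T -> Prop) -> Prop) {FF : Filter F} h l :
  filterlim h F (locally l) -> F (fun x => l < h x) -> filterlim h F (at_right l).
Proof.
  intros Hh Habove P HP. specialize (Hh _ HP).
  apply (filter_imp _ _ (fun x Hx => proj2 Hx (proj1 Hx)) (filter_and _ _ Habove Hh)).
Qed.

Lemma filterlim_at_right_0_of_bound h l :
  (forall y, 0 < y <= 1 -> Rabs (h y - l) <= y) -> filterlim h (at_right 0) (locally l).
Proof.
  intros Hb. apply filterlim_locally. intros eps.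
  exists (mkposreal _ (Rmin_pos 1 eps Rlt_0_1 (cond_pos eps))). intros y Hy Hy0.
  apply Rabs_lt_between' in Hy. simpl in Hy.
  pose proof (Rmin_l 1 eps). pose proof (Rmin_r 1 eps).
  change (Rabs (h y - l) < eps). apply Rle_lt_trans with y; [apply Hb |]; lra.
Qed.

Lemma filterlim_opp_fun {T} (F : (T -> Prop) -> Prop) {FF : Filter F} (u : T -> R) a :
  filterlim u F (locally a) -> filterlim (fun y => - u y) F (locally (- a)).
Proof. intros Hu. eapply filterlim_comp; [exact Hu | apply (filterlim_Rbar_opp a)]. Qed.

Lemma filterlim_lincomb {T} (F : (T -> Prop) -> Prop) {FF : Filter F} (u v : T -> R) a c k :
  filterlim u F (locally a) -> filterlim v F (locally c) ->
  filterlim (fun y => u y - k * v y) F (locally (a - k * c)).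
Proof.
  intros Hu Hv.
  apply (filterlim_ext (fun y => u y + (- k) * v y)); [intros; ring |].
  replace (a - k * c) with (a + - k * c) by ring.
  apply (filterlim_comp_2 (G := Rbar_locally a) (H := Rbar_locally (- k * c))
           u (fun y => - k * v y) Rplus Hu).
  - eapply filterlim_comp; [exact Hv | apply (filterlim_Rbar_mult_l (- k) c)].
  - now apply (filterlim_Rbar_plus a (- k * c) (a + - k * c)).
Qed.

Lemma filterlim_mult_fun {T} (F : (T -> Prop) -> Prop) {FF : Filter F} (u v : T -> R) a c :
  filterlim u F (locally a) -> filterlim v F (locally c) ->
  filterlim (fun y => u y * v y) F (locally (a * c)).
Proof.
  intros Hu Hv.
  apply (filterlim_comp_2 (G := Rbar_locally a) (H := Rbar_locally c) u v Rmult Hu Hv).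
  now apply (filterlim_Rbar_mult a c (a * c)).
Qed.

Lemma filterlim_div_fun {T} (F : (T -> Prop) -> Prop) {FF : Filter F} (u v : T -> R) a c :
  c <> 0 -> filterlim u F (locally a) -> filterlim v F (locally c) ->
  filterlim (fun y => u y / v y) F (locally (a / c)).
Proof.
  intros Hc Hu Hv. apply (filterlim_mult_fun F u (fun y => / v y)); [exact Hu |].
  eapply filterlim_comp; [exact Hv |].
  apply (filterlim_Rbar_inv c). congruence.
Qed.

Lemma filterlim_ex_lt {T} (F : (T -> Prop) -> Prop) {FF : ProperFilter F} (P : T -> Prop) h l c :
  F P -> filterlim h F (locally l) -> l < c -> exists x, P x /\ h x < c.
Proof.
  intros HP Hh Hlc.
  apply (proj1 (filterlim_locally h l)) with (eps := mkposreal _ (proj2 (Rlt_0_minus _ _) Hlc))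
    in Hh.
  destruct (filter_ex _ (filter_and _ _ HP Hh)) as [x [Hx Hb]].
  apply Rabs_lt_between' in Hb. simpl in Hb. exists x. split; [exact Hx | lra].
Qed.

Lemma filterlim_ex_gt {T} (F : (T -> Prop) -> Prop) {FF : ProperFilter F} (P : T -> Prop) h l c :
  F P -> filterlim h F (locally l) -> c < l -> exists x, P x /\ c < h x.
Proof.
  intros HP Hh Hcl.
  destruct (filterlim_ex_lt F P (fun x => - h x) (- l) (- c)) as [x [Hx Hb]]; [exact HP | | lra |].
  - exact (filterlim_opp_fun F h l Hh).
  - exists x. split; [exact Hx | lra].
Qed.

Lemma strict_incr_gt_lim_right a b h l :
  strict_incr_on a b h -> filterlim h (at_right a) (locally l) -> forall x, a < x < b -> l < h x.
Proof.
  intros Hincr Hlim x Hx.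
  set (y := (a + x) / 2).
  assert (Hly : l <= h y).
  { apply Rnot_lt_le. intros Hyl.
    destruct (filterlim_ex_gt (at_right a) (fun z => a < z < y) h l (h y))
      as [z [Hz Hzy]]; [apply at_right_interval; unfold y; lra | exact Hlim | exact Hyl |].
    assert (h z < h y) by (apply Hincr; unfold y in *; lra). lra. }
  assert (h y < h x) by (apply Hincr; unfold y; lra). lra.
Qed.

Lemma strict_incr_lt_lim_left a b h l :
  strict_incr_on a b h -> filterlim h (at_left b) (locally l) -> forall x, a < x < b -> h x < l.
Proof.
  intros Hincr Hlim x Hx.
  assert (H : - l < - h (- - x)).
  { apply (strict_incr_gt_lim_right (- b) (- a) (fun y => - h (- y))); [| |lra].
    - intros y z Hy Hyz Hz. apply Ropp_lt_contravar, Hincr; lra.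
    - apply (filterlim_comp _ _ _ Ropp (fun y => - h y) _ (at_left b)).
      + rewrite <- (Ropp_involutive b) at 2. apply filterlim_Ropp_right.
      + exact (filterlim_opp_fun _ h l Hlim). }
  rewrite Ropp_involutive in H. lra.
Qed.

Lemma strict_incr_lim_right_bounds a b r l : a < b -> strict_incr_on a b r ->
  filterlim r (at_right a) (locally l) ->
  (forall x, a < x < b -> l < r x) /\ (forall c, l < c -> exists x, a < x < b /\ r x < c).
Proof.
  intros Hab Hr Hl. split; [now apply strict_incr_gt_lim_right |].
  intros c Hc. exact (filterlim_ex_lt _ _ r l c (at_right_interval a b Hab) Hl Hc).
Qed.

Lemma strict_incr_lim_left_bounds a b r l : a < b -> strict_incr_on a b r ->
  filterlim r (at_left b) (locally l) ->
  (forall x, a < x < b -> r x < l) /\ (forall c, c < l -> exists x, a < x < b /\ c < r x).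
Proof.
  intros Hab Hr Hl. split; [now apply strict_incr_lt_lim_left |].
  intros c Hc. exact (filterlim_ex_gt _ _ r l c (at_left_interval a b Hab) Hl Hc).
Qed.

(** * A monotone l'Hopital rule *)

Section MonotoneLHopital.
Variables (b L : R) (f g g' m : R -> R).
Hypothesis b_pos : 0 < b.
Hypothesis f_deriv : forall y, 0 < y < b -> derivable_pt_lim f y (g' y * m y).
Hypothesis g_deriv : forall y, 0 < y < b -> derivable_pt_lim g y (g' y).
Hypothesis g'_pos : forall y, 0 < y < b -> 0 < g' y.
Hypothesis m_incr : strict_incr_on 0 b m.
Hypothesis f_lim : filterlim f (at_right 0) (locally 0).
Hypothesis g_lim : filterlim g (at_right 0) (locally 0).
Hypothesis m_lim : filterlim m (at_right 0) (locally L).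

Let lincomb_deriv k y : 0 < y < b ->
  derivable_pt_lim (fun t => f t - k * g t) y (g' y * (m y - k)).
Proof.
  intros Hy. replace (g' y * (m y - k)) with (g' y * m y - k * g' y) by ring.
  apply derivable_pt_lim_minus; [apply f_deriv, Hy |].
  apply derivable_pt_lim_scal, g_deriv, Hy.
Qed.

Let lincomb_lim k : filterlim (fun t => f t - k * g t) (at_right 0) (locally 0).
Proof.
  assert (H := filterlim_lincomb _ f g 0 0 k f_lim g_lim).
  now replace (0 - k * 0) with 0 in H by ring.
Qed.

Lemma lhopital_g_pos x : 0 < x < b -> 0 < g x.
Proof.
  apply (strict_incr_gt_lim_right 0 b); [| exact g_lim].
  apply (strict_incr_of_deriv g g'); assumption.
Qed.

Lemma lhopital_lower x : 0 < x < b -> L * g x < f x.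
Proof.
  intros Hx.
  enough (0 < f x - L * g x) by lra.
  apply (strict_incr_gt_lim_right 0 b (fun t => f t - L * g t)); [| apply lincomb_lim | exact Hx].
  apply (strict_incr_of_deriv _ _ _ _ (lincomb_deriv L)).
  intros y Hy. apply Rmult_lt_0_compat; [now apply g'_pos |].
  assert (L < m y) by (now apply (strict_incr_gt_lim_right 0 b m)). lra.
Qed.

Lemma lhopital_upper x : 0 < x < b -> f x < m x * g x.
Proof.
  intros Hx.
  set (h := fun t => - (f t - m x * g t)).
  assert (Hd : forall y, 0 < y <= x -> derivable_pt_lim h y (- (g' y * (m y - m x)))).
  { intros y Hy. apply derivable_pt_lim_opp, lincomb_deriv. lra. }
  assert (Hpos : forall y, 0 < y < x -> 0 < - (g' y * (m y - m x))).
  { intros y Hy. assert (0 < g' y) by (apply g'_pos; lra).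
    assert (m y < m x) by (apply m_incr; lra). nra. }
  assert (Hmid : 0 < h (x / 2)).
  { apply (strict_incr_gt_lim_right 0 x); [| | lra].
    - apply (strict_incr_of_deriv h (fun y => - (g' y * (m y - m x)))); [| exact Hpos].
      intros y Hy. apply Hd. lra.
    - assert (H := filterlim_opp_fun _ _ _ (lincomb_lim (m x))).
      rewrite Ropp_0 in H. exact H. }
  assert (h (x / 2) < h x).
  { apply (lt_of_deriv_pos h (fun y => - (g' y * (m y - m x))) (x / 2) x); [lra | |].
    - intros y Hy. apply Hd. lra.
    - intros y Hy. apply Hpos. lra. }
  unfold h in *. lra.
Qed.

Lemma lhopital_ratio_incr : strict_incr_on 0 b (fun t => f t / g t).
Proof.
  apply (strict_incr_of_deriv _ (fun t => g' t * (m t * g t - f t) / (g t)²)).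
  - intros y Hy. assert (0 < g y) by (now apply lhopital_g_pos).
    replace (g' y * (m y * g y - f y) / (g y)²)
      with ((g' y * m y * g y - g' y * f y) / (g y)²) by (unfold Rsqr; field; lra).
    apply (derivable_pt_lim_div f g); [apply f_deriv | apply g_deriv | ]; lra.
  - intros y Hy. assert (0 < g y) by (now apply lhopital_g_pos).
    assert (f y < m y * g y) by (now apply lhopital_upper).
    apply Rdiv_lt_0_compat; [apply Rmult_lt_0_compat; [now apply g'_pos | lra] |].
    apply Rsqr_pos_lt. lra.
Qed.

Lemma lhopital_ratio_lim : filterlim (fun t => f t / g t) (at_right 0) (locally L).
Proof.
  apply (filterlim_le_le (fun _ => L) _ m (Finite L)).
  - apply (filter_imp (fun t => 0 < t < b)); [| now apply at_right_interval].
    intros t Ht. assert (0 < g t) by (now apply lhopital_g_pos).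
    assert (L * g t < f t) by (now apply lhopital_lower).
    assert (f t < m t * g t) by (now apply lhopital_upper).
    split; [apply Rle_div_r | apply Rle_div_l]; lra.
  - apply filterlim_const.
  - exact m_lim.
Qed.
End MonotoneLHopital.

(** * Taylor bounds for sine and cosine *)

Lemma INR_fact_succ n : INR (Factorial.fact (S n)) = INR (S n) * INR (Factorial.fact n).
Proof. rewrite <- mult_INR. reflexivity. Qed.

(* [INR_fact_succ] avoids computing [fact k] in unary. *)
Ltac expand_taylor_poly :=
  unfold sin_lb, sin_ub, cos_lb, cos_ub, sin_approx, cos_approx, sin_term, cos_term;
  cbn [sum_f_R0 Nat.mul Nat.add]; repeat rewrite INR_fact_succ; cbn [INR Factorial.fact]; field.

Lemma sin_lb_eq x : sin_lb x = x - x^3/6 + x^5/120 - x^7/5040.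
Proof. expand_taylor_poly. Qed.
Lemma sin_ub_eq x : sin_ub x = x - x^3/6 + x^5/120 - x^7/5040 + x^9/362880.
Proof. expand_taylor_poly. Qed.
Lemma cos_lb_eq x : cos_lb x = 1 - x^2/2 + x^4/24 - x^6/720.
Proof. expand_taylor_poly. Qed.
Lemma cos_ub_eq x : cos_ub x = 1 - x^2/2 + x^4/24 - x^6/720 + x^8/40320.
Proof. expand_taylor_poly. Qed.

Lemma cos_approx_6_eq x : cos_approx x 6 =
  1 - x^2/2 + x^4/24 - x^6/720 + x^8/40320 - x^10/3628800 + x^12/479001600.
Proof. expand_taylor_poly. Qed.

Lemma PI2_lt_3927_2500 : PI / 2 < 3927 / 2500.
Proof.
  apply Rnot_le_lt. intros Hle.
  assert (Hx : - PI / 2 <= 3927 / 2500 <= PI / 2) by (pose proof PI_RGT_0; lra).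
  assert (0 <= cos (3927 / 2500)) by (apply cos_ge_0; lra).
  pose proof (cos_bound (3927 / 2500) 2 (proj1 Hx) (proj2 Hx)) as Hub.
  rewrite cos_approx_6_eq in Hub. lra.
Qed.

(* Positivity on [0, B] of [w] times a polynomial in [z]: [lra] looks for a nonnegative
   combination of the Bernstein basis [z^i (B - z)^j], [i + j = n]. *)
Ltac bernstein_hints w z B n :=
  let rec go i j :=
    assert (0 <= w * (z ^ i * (B - z) ^ j))
      by (apply Rmult_le_pos; [lra | apply Rmult_le_pos; apply pow_le; lra]);
    lazymatch j with O => idtac | S ?j' => go (S i) j' end
  in go O n.

(* [x < 3927/2500], an upper bound of [PI/2], gives [x^2 <= 987/400]. *)
Ltac bernstein x k n :=
  assert (0 <= x ^ 2 <= 987 / 400) by nra;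
  assert (0 < x ^ k) by (apply pow_lt; lra);
  bernstein_hints (x ^ k) (x ^ 2) (987 / 400) n;
  generalize (sin_lb_eq x) (sin_ub_eq x) (cos_ub_eq x);
  generalize (sin_lb x) (sin_ub x) (cos_ub x); intros ? ? ? -> -> ->; lra.

Section TaylorPolynomials.
Variable x : R.
Hypothesis Hx : 0 < x < 3927 / 2500.

Lemma taylor_cubic_value_pos : 0 < x * sin_lb x ^ 3 + (81 - 36 * x ^ 2) * sin_lb x ^ 2 * cos_ub x
  - 57 * x * sin_lb x * cos_ub x ^ 2 - 24 * x ^ 2 * cos_ub x ^ 3.
Proof. bernstein x 10%nat 8%nat. Qed.

Lemma taylor_cubic_slope_pos :
  0 < 3 * x * sin_lb x ^ 2 + 2 * (81 - 36 * x ^ 2) * sin_lb x * cos_ub x - 57 * x * cos_ub x ^ 2.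
Proof. bernstein x 1%nat 8%nat. Qed.

Lemma taylor_cubic_curvature_pos : 0 < 3 * x * sin_lb x + (81 - 36 * x ^ 2) * cos_ub x.
Proof. bernstein x 0%nat 5%nat. Qed.

Lemma taylor_Y_slope_pos : 0 < 3 * cos_ub x * (sin_ub x + sin_lb x) + 2 * x ^ 3 - 6 * x
  + x * (sin_ub x ^ 2 + sin_ub x * sin_lb x + sin_lb x ^ 2).
Proof. bernstein x 3%nat 8%nat. Qed.

Lemma taylor_Y_value_neg :
  cos_ub x * (3 * sin_ub x ^ 2 + 3 * x ^ 2) + sin_ub x * (2 * x ^ 3 - 6 * x) + x * sin_ub x ^ 3 < 0.
Proof. bernstein x 10%nat 9%nat. Qed.

End TaylorPolynomials.

(** * Inequalities for [1/x - cot x] *)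

Lemma sin_sub_mul_cos_pos x : 0 < x < PI -> 0 < sin x - x * cos x.
Proof.
  intros Hx.
  apply (pos_of_deriv_pos (fun y => sin y - y * cos y) (fun y => y * sin y) PI); [| | | lra].
  - rewrite sin_0. ring.
  - intros y _. apply is_derive_Reals. auto_derive; [exact I | ring].
  - intros y Hy. apply Rmult_lt_0_compat; [| apply sin_gt_0]; lra.
Qed.

Lemma trig_facts x : 0 < x < PI / 2 ->
  0 < sin x /\ 0 < cos x /\ 0 < sin x - x * cos x /\ x < 3927 / 2500 /\
  sin_lb x <= sin x <= sin_ub x /\ cos_lb x <= cos x <= cos_ub x.
Proof.
  intros Hx. pose proof PI_RGT_0. pose proof PI2_lt_3927_2500.
  split; [apply sin_gt_0; lra |]. split; [apply cos_gt_0; lra |].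
  split; [apply sin_sub_mul_cos_pos; lra |]. split; [lra |].
  split; [apply SIN | apply COS]; lra.
Qed.

Definition cot_defect (x : R) : R := 1 / x - cos x / sin x.

Lemma cot_defect_eq x : 0 < x < PI / 2 ->
  cot_defect x = (sin x - x * cos x) / (x * sin x).
Proof.
  intros Hx. destruct (trig_facts x Hx) as (Hs & _).
  unfold cot_defect. field. lra.
Qed.

Lemma cot_defect_pos x : 0 < x < PI / 2 -> 0 < cot_defect x.
Proof.
  intros Hx. destruct (trig_facts x Hx) as (Hs & Hc & HN & _).
  rewrite cot_defect_eq by exact Hx. apply Rdiv_lt_0_compat; nra.
Qed.

Lemma three_cot_defect_lt_tan x : 0 < x < PI / 2 -> 3 * cot_defect x < tan x.
Proof.
  intros Hx. destruct (trig_facts x Hx) as (Hs & Hc & _).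
  assert (Hpos : 0 < 2 * x * cos x ^ 2 + x - 3 * sin x * cos x).
  { apply (pos_of_deriv_pos (fun y => 2 * y * cos y ^ 2 + y - 3 * sin y * cos y)
             (fun y => 4 * sin y * (sin y - y * cos y)) (PI / 2)); [| | | lra].
    - rewrite sin_0. ring.
    - intros y _. apply is_derive_Reals. auto_derive; [exact I |].
      pose proof (sin2_cos2 y) as Hsc. unfold Rsqr in Hsc. nra.
    - intros y Hy. destruct (trig_facts y Hy) as (Hsy & _ & HNy & _). nra. }
  replace (2 * x * cos x ^ 2 + x - 3 * sin x * cos x)
    with (x * sin x ^ 2 - 3 * sin x * cos x + 3 * x * cos x ^ 2) in Hpos
    by (pose proof (sin2_cos2 x) as Hsc; unfold Rsqr in Hsc; nra).
  apply Rminus_lt_0. unfold cot_defect, tan.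
  replace (sin x / cos x - 3 * (1 / x - cos x / sin x))
    with ((x * sin x ^ 2 - 3 * sin x * cos x + 3 * x * cos x ^ 2) / (x * sin x * cos x))
    by (field; lra).
  apply Rdiv_lt_0_compat; [lra |]. apply Rmult_lt_0_compat; nra.
Qed.

(* Evaluated at [2 x], this is the numerator of [3/5 v + 1/v - 3/x] for [v = cot_defect x]. *)
Lemma cot_defect_aux_pos u : 0 < u < PI ->
  0 < 4 * u ^ 2 - u ^ 2 * cos u - 24 + 24 * cos u + 9 * u * sin u.
Proof.
  intros Hu.
  assert (H3 : forall y, 0 < y <= PI -> 0 < 3 * sin y - 3 * y * cos y - y ^ 2 * sin y).
  { apply (pos_of_deriv_pos _ (fun y => y * (sin y - y * cos y))).
    - rewrite sin_0. ring.
    - intros y _. apply is_derive_Reals. auto_derive; [exact I | ring].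
    - intros y Hy. apply Rmult_lt_0_compat; [lra | apply sin_sub_mul_cos_pos; lra]. }
  assert (H2 : forall y, 0 < y <= PI -> 0 < 8 - 8 * cos y - 5 * y * sin y + y ^ 2 * cos y).
  { apply (pos_of_deriv_pos _ (fun y => 3 * sin y - 3 * y * cos y - y ^ 2 * sin y)).
    - rewrite sin_0, cos_0. ring.
    - intros y _. apply is_derive_Reals. auto_derive; [exact I | ring].
    - intros y Hy. apply H3. lra. }
  assert (H1 : forall y, 0 < y <= PI -> 0 < 8 * y + 7 * y * cos y + y ^ 2 * sin y - 15 * sin y).
  { apply (pos_of_deriv_pos _ (fun y => 8 - 8 * cos y - 5 * y * sin y + y ^ 2 * cos y)).
    - rewrite sin_0. ring.
    - intros y _. apply is_derive_Reals. auto_derive; [exact I | ring].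
    - intros y Hy. apply H2. lra. }
  apply (pos_of_deriv_pos (fun y => 4 * y ^ 2 - y ^ 2 * cos y - 24 + 24 * cos y + 9 * y * sin y)
           (fun y => 8 * y + 7 * y * cos y + y ^ 2 * sin y - 15 * sin y) PI); [| | | lra].
  - rewrite sin_0, cos_0. ring.
  - intros y _. apply is_derive_Reals. auto_derive; [exact I | ring].
  - intros y Hy. apply H1. lra.
Qed.

Lemma three_div_lt_cot_defect x : 0 < x < PI / 2 ->
  3 / x < 3 / 5 * cot_defect x + 1 / cot_defect x.
Proof.
  intros Hx. destruct (trig_facts x Hx) as (Hs & Hc & HN & _).
  assert (Hnum : 0 < 3 * (sin x - x * cos x) ^ 2 - 15 * (sin x - x * cos x) * sin x
                     + 5 * x ^ 2 * sin x ^ 2).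
  { pose proof (cot_defect_aux_pos (2 * x) ltac:(lra)) as H.
    rewrite sin_2a, cos_2a in H. pose proof (sin2_cos2 x) as Hsc. unfold Rsqr in Hsc. nra. }
  rewrite cot_defect_eq by exact Hx. apply Rminus_lt_0.
  replace (3 / 5 * ((sin x - x * cos x) / (x * sin x)) + 1 / ((sin x - x * cos x) / (x * sin x))
           - 3 / x)
    with ((3 * (sin x - x * cos x) ^ 2 - 15 * (sin x - x * cos x) * sin x + 5 * x ^ 2 * sin x ^ 2)
          / (5 * x * sin x * (sin x - x * cos x))) by (field; lra).
  apply Rdiv_lt_0_compat; [lra |]. apply Rmult_lt_0_compat; [nra | lra].
Qed.

Lemma cubic_pos_of_taylor a b c d t0 t : t0 <= t -> 0 <= a ->
  0 <= 3 * a * t0 + b -> 0 <= 3 * a * t0 ^ 2 + 2 * b * t0 + c ->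
  0 < a * t0 ^ 3 + b * t0 ^ 2 + c * t0 + d -> 0 < a * t ^ 3 + b * t ^ 2 + c * t + d.
Proof.
  intros Ht Ha H2 H1 H0.
  replace (a * t ^ 3 + b * t ^ 2 + c * t + d)
    with ((a * t0 ^ 3 + b * t0 ^ 2 + c * t0 + d) + (3 * a * t0 ^ 2 + 2 * b * t0 + c) * (t - t0)
          + (3 * a * t0 + b) * (t - t0) ^ 2 + a * (t - t0) ^ 3) by ring.
  assert (0 <= (3 * a * t0 ^ 2 + 2 * b * t0 + c) * (t - t0)) by (apply Rmult_le_pos; lra).
  assert (0 <= (3 * a * t0 + b) * (t - t0) ^ 2) by (apply Rmult_le_pos; [| apply pow_le]; lra).
  assert (0 <= a * (t - t0) ^ 3) by (apply Rmult_le_pos; [| apply pow_le]; lra).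
  lra.
Qed.

Lemma cot_defect_tan_ineq x : 0 < x < PI / 2 ->
  24 * cot_defect x - tan x + 35 / cot_defect x < 105 / x.
Proof.
  intros Hx. destruct (trig_facts x Hx) as (Hs & Hc & HN & Hx1 & [Hslb _] & [_ Hcub]).
  assert (Hx' : 0 < x < 3927 / 2500) by lra.
  pose proof (sin_lb_gt_0 x (proj1 Hx) (Rlt_le _ _ (proj2 Hx))) as Hslb0.
  set (t0 := sin_lb x / cos_ub x).
  assert (Ht0 : t0 <= tan x).
  { unfold t0, tan. apply Rle_trans with (sin_lb x / cos x).
    - apply Rmult_le_compat_l; [lra |]. apply Rinv_le_contravar; lra.
    - apply Rmult_le_compat_r; [apply Rlt_le, Rinv_0_lt_compat |]; lra. }
  assert (Hphi : 0 < x * tan x ^ 3 + (81 - 36 * x ^ 2) * tan x ^ 2 + (- 57 * x) * tan x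
                     + (- 24 * x ^ 2)).
  { apply (cubic_pos_of_taylor _ _ _ _ t0); [exact Ht0 | lra | | |].
    - replace (3 * x * t0 + (81 - 36 * x ^ 2))
        with ((3 * x * sin_lb x + (81 - 36 * x ^ 2) * cos_ub x) / cos_ub x)
        by (unfold t0; field; lra).
      apply Rlt_le, Rdiv_lt_0_compat; [apply taylor_cubic_curvature_pos |]; lra.
    - replace (3 * x * t0 ^ 2 + 2 * (81 - 36 * x ^ 2) * t0 + - 57 * x)
        with ((3 * x * sin_lb x ^ 2 + 2 * (81 - 36 * x ^ 2) * sin_lb x * cos_ub x
               - 57 * x * cos_ub x ^ 2) / cos_ub x ^ 2) by (unfold t0; field; lra).
      apply Rlt_le, Rdiv_lt_0_compat; [apply taylor_cubic_slope_pos | apply pow_lt]; lra.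
    - replace (x * t0 ^ 3 + (81 - 36 * x ^ 2) * t0 ^ 2 + - 57 * x * t0 + - 24 * x ^ 2)
        with ((x * sin_lb x ^ 3 + (81 - 36 * x ^ 2) * sin_lb x ^ 2 * cos_ub x
               - 57 * x * sin_lb x * cos_ub x ^ 2 - 24 * x ^ 2 * cos_ub x ^ 3) / cos_ub x ^ 3)
        by (unfold t0; field; lra).
      apply Rdiv_lt_0_compat; [apply taylor_cubic_value_pos | apply pow_lt]; lra. }
  rewrite cot_defect_eq by exact Hx. apply Rminus_lt_0.
  replace (105 / x - (24 * ((sin x - x * cos x) / (x * sin x)) - tan x
                      + 35 / ((sin x - x * cos x) / (x * sin x))))
    with (cos x ^ 3 * (x * tan x ^ 3 + (81 - 36 * x ^ 2) * tan x ^ 2 + - 57 * x * tan x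
                       + - 24 * x ^ 2) / (cos x * x * sin x * (sin x - x * cos x)))
    by (unfold tan; field; lra).
  apply Rdiv_lt_0_compat; [apply Rmult_lt_0_compat; [apply pow_lt |] |]; try lra.
  repeat apply Rmult_lt_0_compat; lra.
Qed.

Lemma K_deriv_numerator_neg x : 0 < x < PI / 2 ->
  3 * cos x * sin x ^ 2 - 5 * x * sin x - x * sin x * cos x ^ 2 + 3 * x ^ 2 * cos x
  + 2 * x ^ 3 * sin x < 0.
Proof.
  intros Hx. destruct (trig_facts x Hx) as (Hs & Hc & _ & Hx1 & [Hslb Hsub] & [_ Hcub]).
  assert (Hx' : 0 < x < 3927 / 2500) by lra.
  pose proof (sin_lb_gt_0 x (proj1 Hx) (Rlt_le _ _ (proj2 Hx))) as Hslb0.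
  pose proof (taylor_Y_slope_pos x Hx') as Hslope. pose proof (taylor_Y_value_neg x Hx') as Hub.
  set (Y := fun s => cos_ub x * (3 * s ^ 2 + 3 * x ^ 2) + s * (2 * x ^ 3 - 6 * x) + x * s ^ 3).
  assert (HY : 3 * cos x * sin x ^ 2 - 5 * x * sin x - x * sin x * cos x ^ 2 + 3 * x ^ 2 * cos x
               + 2 * x ^ 3 * sin x <= Y (sin x)).
  { pose proof (sin2_cos2 x) as Hsc. unfold Rsqr in Hsc. unfold Y.
    replace (cos x ^ 2) with (1 - sin x ^ 2) by nra.
    assert (cos x * (3 * sin x ^ 2 + 3 * x ^ 2) <= cos_ub x * (3 * sin x ^ 2 + 3 * x ^ 2))
      by (apply Rmult_le_compat_r; nra).
    nra. }
  (* [Y] is increasing on [[sin_lb x, sin_ub x]]. *)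
  assert (Y (sin_ub x) - Y (sin x) = (sin_ub x - sin x)
            * (3 * cos_ub x * (sin_ub x + sin x) + 2 * x ^ 3 - 6 * x
               + x * (sin_ub x ^ 2 + sin_ub x * sin x + sin x ^ 2))) by (unfold Y; ring).
  assert (0 <= (sin_ub x - sin x)
            * (3 * cos_ub x * (sin_ub x + sin x) + 2 * x ^ 3 - 6 * x
               + x * (sin_ub x ^ 2 + sin_ub x * sin x + sin x ^ 2))).
  { apply Rmult_le_pos; [lra |].
    assert (x * (sin_ub x ^ 2 + sin_ub x * sin_lb x + sin_lb x ^ 2)
            <= x * (sin_ub x ^ 2 + sin_ub x * sin x + sin x ^ 2))
      by (apply Rmult_le_compat_l; nra).
    nra. }
  assert (Y (sin_ub x) < 0) by exact Hub.
  lra.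
Qed.

(* The right-hand side is [3 / (x v) - 1 / v^2] for [v = cot_defect x]; it decreases on
   [(0, pi/2]]. *)
Lemma K_gt x : 0 < x < PI / 2 ->
  3 - PI ^ 2 / 4 < 3 * sin x / (sin x - x * cos x) - (x * sin x / (sin x - x * cos x)) ^ 2.
Proof.
  intros Hx. pose proof PI_RGT_0 as Hpi.
  set (N := fun y => sin y - y * cos y).
  assert (HN : forall y, 0 < y <= PI / 2 -> 0 < N y) by (intros; apply sin_sub_mul_cos_pos; lra).
  set (K := fun y => 3 * sin y / N y - (y * sin y / N y) ^ 2).
  assert (HK : K (PI / 2) = 3 - PI ^ 2 / 4) by (unfold K, N; rewrite sin_PI2, cos_PI2; field).
  enough (- K x < - K (PI / 2)) by (unfold K, N in *; lra).
  apply (lt_of_deriv_pos (fun y => - K y)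
           (fun y => - (((3 * cos y * N y - 5 * y * sin y ^ 2 - 2 * y ^ 2 * sin y * cos y) * N y
                         + 2 * y ^ 3 * sin y ^ 3) / N y ^ 3))); [lra | |].
  - intros y Hy. specialize (HN y ltac:(lra)). apply is_derive_Reals. unfold K, N in *.
    auto_derive; [repeat split; lra | field; lra].
  - intros y Hy. specialize (HN y ltac:(lra)).
    pose proof (K_deriv_numerator_neg y ltac:(lra)).
    pose proof (sin2_cos2 y) as Hsc. unfold Rsqr in Hsc.
    apply Ropp_0_gt_lt_contravar, Rdiv_neg_pos; [| apply pow_lt, HN].
    unfold N.
    replace ((3 * cos y * (sin y - y * cos y) - 5 * y * sin y ^ 2 - 2 * y ^ 2 * sin y * cos y)
             * (sin y - y * cos y) + 2 * y ^ 3 * sin y ^ 3)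
      with (3 * cos y * sin y ^ 2 - 5 * y * sin y - y * sin y * cos y ^ 2 + 3 * y ^ 2 * cos y
            + 2 * y ^ 3 * sin y
            + (sin y * sin y + cos y * cos y - 1) * (- 5 * y * sin y + 3 * y ^ 2 * cos y
                                                    + 2 * y ^ 3 * sin y)) by ring.
    rewrite Hsc. lra.
Qed.

Lemma cot_defect_large_p_ineq p x : 0 < x < PI / 2 -> PI ^ 2 / 4 - 1 <= p ->
  (2 - p) * cot_defect x + 1 / cot_defect x < 3 / x.
Proof.
  intros Hx Hp. destruct (trig_facts x Hx) as (Hs & Hc & HN & _).
  pose proof (K_gt x Hx) as HK.
  rewrite cot_defect_eq by exact Hx. apply Rminus_lt_0.
  replace (3 / x - ((2 - p) * ((sin x - x * cos x) / (x * sin x))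
                    + 1 / ((sin x - x * cos x) / (x * sin x))))
    with ((sin x - x * cos x) / (x * sin x)
          * ((3 * sin x / (sin x - x * cos x) - (x * sin x / (sin x - x * cos x)) ^ 2) - (2 - p)))
    by (field; lra).
  apply Rmult_lt_0_compat; [apply Rdiv_lt_0_compat; nra | lra].
Qed.

Definition G (p q x : R) : R :=
  (2 - p) * cot_defect x + (q - 1) * tan x + 1 / cot_defect x - 3 / x.

Lemma G_pos p q x : 1 <= q -> p <= 3 * q - 8 / 5 -> 0 < x < PI / 2 -> 0 < G p q x.
Proof.
  intros Hq Hp Hx.
  pose proof (cot_defect_pos x Hx). pose proof (three_cot_defect_lt_tan x Hx).
  pose proof (three_div_lt_cot_defect x Hx).
  assert (0 <= (3 * q - 8 / 5 - p) * cot_defect x) by (apply Rmult_le_pos; lra).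
  assert (0 <= (q - 1) * (tan x - 3 * cot_defect x)) by (apply Rmult_le_pos; lra).
  unfold G. lra.
Qed.

Lemma G_neg_small_q p q x : q <= 34 / 35 -> 3 * q - 8 / 5 <= p -> 0 < x < PI / 2 -> G p q x < 0.
Proof.
  intros Hq Hp Hx.
  pose proof (cot_defect_pos x Hx). pose proof (three_cot_defect_lt_tan x Hx).
  pose proof (cot_defect_tan_ineq x Hx).
  assert (0 <= (p - (3 * q - 8 / 5)) * cot_defect x) by (apply Rmult_le_pos; lra).
  assert (0 <= (34 / 35 - q) * (tan x - 3 * cot_defect x)) by (apply Rmult_le_pos; lra).
  replace (G p q x)
    with (- ((p - (3 * q - 8 / 5)) * cot_defect x) - (34 / 35 - q) * (tan x - 3 * cot_defect x)
          + / 35 * (24 * cot_defect x - tan x + 35 / cot_defect x - 105 / x))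
    by (unfold G; field; split; lra).
  lra.
Qed.

Lemma G_neg_large_p p q x : q <= 1 -> PI ^ 2 / 4 - 1 <= p -> 0 < x < PI / 2 -> G p q x < 0.
Proof.
  intros Hq Hp Hx. destruct (trig_facts x Hx) as (Hs & Hc & _).
  pose proof (cot_defect_large_p_ineq p x Hx Hp).
  assert (0 < tan x) by (apply Rdiv_lt_0_compat; lra).
  assert ((1 - q) * tan x >= 0) by (apply Rle_ge, Rmult_le_pos; lra).
  unfold G. lra.
Qed.

(** * The functions [U_p (sin x / x)] and [U_q (cos x)] *)

Lemma Rpower_1_l a : Rpower 1 a = 1.
Proof. unfold Rpower. rewrite ln_1, Rmult_0_r. apply exp_0. Qed.

Lemma U_1 p : U p 1 = 0.
Proof.
  unfold U. destruct (Req_EM_T p 0) as [_ | Hp]; [rewrite ln_1; ring |].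
  rewrite Rpower_1_l. field. exact Hp.
Qed.

Lemma U_deriv p t : 0 < t -> derivable_pt_lim (U p) t (- Rpower t (p - 1)).
Proof.
  intros Ht. destruct (Req_EM_T p 0) as [-> | Hp].
  - apply (derivable_pt_lim_ext (fun x => - ln x));
      [intros x; unfold U; destruct (Req_EM_T 0 0); easy |].
    apply is_derive_Reals. unfold Rpower. auto_derive; [exact Ht |].
    replace ((0 - 1) * ln t) with (- ln t) by ring.
    rewrite exp_Ropp, exp_ln by exact Ht. field. lra.
  - apply (derivable_pt_lim_ext (fun x => (1 - exp (p * ln x)) / p));
      [intros x; unfold U, Rpower; destruct (Req_EM_T p 0); easy |].
    apply is_derive_Reals. unfold Rpower. auto_derive; [exact Ht |].
    replace ((p - 1) * ln t) with (p * ln t + - ln t) by ring.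
    rewrite exp_plus, exp_Ropp, exp_ln by exact Ht. field. lra.
Qed.

Lemma U_continuous p t : 0 < t -> continuity_pt (U p) t.
Proof.
  intros Ht. apply derivable_continuous_pt. exists (- Rpower t (p - 1)). now apply U_deriv.
Qed.

Lemma U_pos p t : 0 < t < 1 -> 0 < U p t.
Proof.
  intros Ht. rewrite <- (U_1 p).
  enough (- U p t < - U p 1) by lra.
  apply (lt_of_deriv_pos (fun s => - U p s) (fun s => Rpower s (p - 1))); [lra | |].
  - intros s Hs. rewrite <- (Ropp_involutive (Rpower s (p - 1))).
    apply derivable_pt_lim_opp, U_deriv. lra.
  - intros s _. apply exp_pos.
Qed.

Definition cos_U_deriv (q x : R) : R := Rpower (cos x) (q - 1) * sin x.

Definition dratio (p q x : R) : R :=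
  Rpower (sinc x) (p - 1) * Rpower (cos x) (1 - q) * ((sin x - x * cos x) / (x ^ 2 * sin x)).

Definition log_dratio (p q x : R) : R :=
  (p - 1) * ln (sinc x) + (1 - q) * ln (cos x) + ln (sin x - x * cos x) - ln (x ^ 2 * sin x).

Lemma sinc_pos x : 0 < x < PI -> 0 < sinc x.
Proof. intros Hx. apply Rdiv_lt_0_compat; [apply sin_gt_0 |]; lra. Qed.

Lemma cos_U_deriv_pos q x : 0 < x < PI / 2 -> 0 < cos_U_deriv q x.
Proof.
  intros Hx. destruct (trig_facts x Hx) as (Hs & _).
  apply Rmult_lt_0_compat; [apply exp_pos | exact Hs].
Qed.

Lemma cos_U_derivable q x : 0 < x < PI / 2 ->
  derivable_pt_lim (fun y => U q (cos y)) x (cos_U_deriv q x).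
Proof.
  intros Hx. destruct (trig_facts x Hx) as (_ & Hc & _).
  replace (cos_U_deriv q x) with (- Rpower (cos x) (q - 1) * (- sin x))
    by (unfold cos_U_deriv; ring).
  apply (derivable_pt_lim_comp cos (U q)); [apply derivable_pt_lim_cos | now apply U_deriv].
Qed.

Lemma sinc_U_derivable_raw p x : 0 < x < PI ->
  derivable_pt_lim (fun y => U p (sinc y)) x
    (- Rpower (sinc x) (p - 1) * ((x * cos x - sin x) / x ^ 2)).
Proof.
  intros Hx.
  apply (derivable_pt_lim_comp sinc (U p)); [| now apply U_deriv, sinc_pos].
  apply is_derive_Reals. unfold sinc. auto_derive; [lra | field; lra].
Qed.

Lemma sinc_U_derivable p q x : 0 < x < PI / 2 ->
  derivable_pt_lim (fun y => U p (sinc y)) x (cos_U_deriv q x * dratio p q x).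
Proof.
  intros Hx. destruct (trig_facts x Hx) as (Hs & Hc & _).
  replace (cos_U_deriv q x * dratio p q x)
    with (- Rpower (sinc x) (p - 1) * ((x * cos x - sin x) / x ^ 2)).
  - apply sinc_U_derivable_raw. pose proof PI_RGT_0. lra.
  - unfold cos_U_deriv, dratio.
    replace (Rpower (cos x) (q - 1) * sin x
             * (Rpower (sinc x) (p - 1) * Rpower (cos x) (1 - q)
                * ((sin x - x * cos x) / (x ^ 2 * sin x))))
      with (Rpower (cos x) (q - 1 + (1 - q)) * Rpower (sinc x) (p - 1)
            * ((sin x - x * cos x) / x ^ 2)) by (rewrite Rpower_plus; field; lra).
    replace (q - 1 + (1 - q)) with 0 by ring. rewrite Rpower_O by exact Hc. field. lra.
Qed.

Lemma dratio_eq_exp p q x : 0 < x < PI / 2 -> dratio p q x = exp (log_dratio p q x).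
Proof.
  intros Hx. destruct (trig_facts x Hx) as (Hs & Hc & HN & _).
  assert (0 < sinc x) by (apply sinc_pos; pose proof PI_RGT_0; lra).
  unfold dratio, log_dratio, Rpower.
  replace (_ - ln (x ^ 2 * sin x)) with (((p - 1) * ln (sinc x) + (1 - q) * ln (cos x)
    + ln (sin x - x * cos x)) + - ln (x ^ 2 * sin x)) by ring.
  rewrite !exp_plus, exp_Ropp, !exp_ln by (try apply Rmult_lt_0_compat; try apply pow_lt; lra).
  field. split; lra.
Qed.

Lemma log_dratio_deriv p q x : 0 < x < PI / 2 -> derivable_pt_lim (log_dratio p q) x (G p q x).
Proof.
  intros Hx. destruct (trig_facts x Hx) as (Hs & Hc & HN & _).
  apply is_derive_Reals. unfold log_dratio, G, cot_defect, tan, sinc. auto_derive.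
  - repeat split; try lra.
    + apply Rdiv_lt_0_compat; lra.
    + apply Rmult_lt_0_compat; nra.
  - field. repeat split; lra.
Qed.

Lemma dratio_strict_incr p q : (forall x, 0 < x < PI / 2 -> 0 < G p q x) ->
  strict_incr_on 0 (PI / 2) (dratio p q).
Proof.
  intros HG y z Hy Hyz Hz. rewrite !dratio_eq_exp by lra. apply exp_increasing.
  apply (strict_incr_of_deriv _ _ _ _ (log_dratio_deriv p q) HG); assumption.
Qed.

Lemma dratio_strict_decr p q : (forall x, 0 < x < PI / 2 -> G p q x < 0) ->
  strict_incr_on 0 (PI / 2) (fun x => - dratio p q x).
Proof.
  intros HG y z Hy Hyz Hz. rewrite !dratio_eq_exp by lra.
  apply Ropp_lt_contravar, exp_increasing, Ropp_lt_cancel.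
  apply (strict_incr_of_deriv (fun x => - log_dratio p q x) (fun x => - G p q x) 0 (PI / 2));
    [intros x Hx; now apply derivable_pt_lim_opp, log_dratio_deriv
    | intros x Hx; specialize (HG x Hx); lra | assumption ..].
Qed.

Lemma filterlim_sinc_0 : filterlim sinc (at_right 0) (locally 1).
Proof.
  apply (filterlim_filter_le_1 _ (F := locally' 0)); [| exact is_lim_sinc_0].
  intros P HP. apply (filter_imp _ _ (fun y H Hy => H (Rgt_not_eq y 0 Hy)) HP).
Qed.

Lemma filterlim_cos_0 : filterlim cos (at_right 0) (locally 1).
Proof. rewrite <- cos_0. apply filterlim_at_right_of_continuity, continuity_cos. Qed.

Lemma filterlim_sinc_U_0 p : filterlim (fun y => U p (sinc y)) (at_right 0) (locally 0).
Proof.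
  pose proof (filterlim_comp_continuity _ _ (U p) _ filterlim_sinc_0 (U_continuous p 1 Rlt_0_1))
    as H.
  now rewrite U_1 in H.
Qed.

Lemma filterlim_cos_U_0 q : filterlim (fun y => U q (cos y)) (at_right 0) (locally 0).
Proof.
  pose proof (filterlim_comp_continuity _ _ (U q) _ filterlim_cos_0 (U_continuous q 1 Rlt_0_1))
    as H.
  now rewrite U_1 in H.
Qed.

Lemma cot_defect_ratio_bound y : 0 < y <= 1 ->
  Rabs ((sin y - y * cos y) / (y ^ 2 * sin y) - 1 / 3) <= y.
Proof.
  intros Hy. pose proof PI2_3_2.
  destruct (SIN y ltac:(lra) ltac:(lra)) as [Hs1 Hs2].
  destruct (COS y ltac:(lra) ltac:(lra)) as [Hc1 Hc2].
  rewrite sin_lb_eq in Hs1. rewrite sin_ub_eq in Hs2.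
  rewrite cos_lb_eq in Hc1. rewrite cos_ub_eq in Hc2.
  assert (Hz : 0 < y ^ 2 <= 1) by nra.
  set (D := 3 * sin y - 3 * y * cos y - y ^ 2 * sin y).
  assert (HD : 0 <= D <= y ^ 5).
  { assert (0 <= y ^ 2 * y ^ 2 <= 1) by nra. assert (0 < y ^ 5) by (apply pow_lt; lra).
    unfold D. split; nra. }
  assert (HS : 5 / 6 * y <= sin y) by nra.
  replace ((sin y - y * cos y) / (y ^ 2 * sin y) - 1 / 3) with (D / (3 * y ^ 2 * sin y))
    by (unfold D; field; lra).
  rewrite Rabs_pos_eq by (apply Rdiv_le_0_compat; nra).
  apply Rle_div_l; [nra |]. nra.
Qed.

Lemma filterlim_dratio_0 p q : filterlim (dratio p q) (at_right 0) (locally (1 / 3)).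
Proof.
  assert (Hpow : forall u a, filterlim u (at_right 0) (locally 1) ->
            filterlim (fun y => Rpower (u y) a) (at_right 0) (locally 1)).
  { intros u a Hu. rewrite <- (Rpower_1_l a).
    apply (filterlim_comp_continuity _ _ (fun t => Rpower t a) _ Hu).
    apply derivable_continuous_pt. exists (a * Rpower 1 (a - 1)).
    apply derivable_pt_lim_power, Rlt_0_1. }
  replace (1 / 3) with (1 * 1 * (1 / 3)) by ring.
  unfold dratio.
  apply (filterlim_mult_fun (at_right 0)); [apply (filterlim_mult_fun (at_right 0)); apply Hpow |].
  - exact filterlim_sinc_0.
  - exact filterlim_cos_0.
  - apply filterlim_at_right_0_of_bound, cot_defect_ratio_bound.
Qed.

Lemma filterlim_sinc_U_PI2 p :
  filterlim (fun y => U p (sinc y)) (at_left (PI / 2)) (locally (U p (2 / PI))).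
Proof.
  pose proof PI_RGT_0.
  replace (U p (2 / PI)) with (U p (sinc (PI / 2)))
    by (unfold sinc; rewrite sin_PI2; f_equal; field; lra).
  apply (filterlim_at_left_of_continuity (fun y => U p (sinc y))), derivable_continuous_pt.
  eexists. apply sinc_U_derivable_raw. lra.
Qed.

Lemma filterlim_Rpower_0 a : 0 < a -> filterlim (fun t => Rpower t a) (at_right 0) (locally 0).
Proof.
  intros Ha. unfold Rpower.
  apply (filterlim_comp _ _ _ (fun t => a * ln t) exp _ (Rbar_locally m_infty));
    [| exact is_lim_exp_m].
  eapply filterlim_comp; [exact is_lim_ln_0 |].
  replace m_infty with (Rbar_mult a m_infty) at 2
    by now apply is_Rbar_mult_unique, is_Rbar_mult_sym, is_Rbar_mult_m_infty_pos.
  apply filterlim_Rbar_mult_l.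
Qed.

Lemma filterlim_cos_U_PI2 q : 0 < q ->
  filterlim (fun y => U q (cos y)) (at_left (PI / 2)) (locally (1 / q)).
Proof.
  intros Hq. pose proof PI_RGT_0.
  assert (Hcos : filterlim cos (at_left (PI / 2)) (at_right 0)).
  { apply (filterlim_at_right_of_above (at_left (PI / 2))).
    - pose proof (filterlim_at_left_of_continuity cos (PI / 2) (continuity_cos _)) as H'.
      now rewrite cos_PI2 in H'.
    - apply (filter_imp (fun y => 0 < y < PI / 2)); [| apply at_left_interval; lra].
      intros y Hy. apply cos_gt_0; lra. }
  apply (filterlim_ext (fun y => 1 / q - 1 / q * Rpower (cos y) q)).
  { intros y. unfold U. destruct (Req_EM_T q 0); [lra | field; lra]. }
  assert (Hlim := filterlim_lincomb _ (fun _ => 1 / q) (fun y => Rpower (cos y) q) (1 / q) 0 (1 / q)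
                   (filterlim_const _)
                   (filterlim_comp _ _ _ _ _ _ _ _ Hcos (filterlim_Rpower_0 q Hq))).
  now replace (1 / q - 1 / q * 0) with (1 / q) in Hlim by ring.
Qed.

Lemma cos_U_pos q x : 0 < x < PI / 2 -> 0 < U q (cos x).
Proof.
  intros Hx. destruct (trig_facts x Hx) as (Hs & Hc & _).
  pose proof (sin2_cos2 x) as Hsc. unfold Rsqr in Hsc.
  apply U_pos. split; [exact Hc | nra].
Qed.

Definition U_ratio (p q x : R) : R := U p (sinc x) / U q (cos x).

Lemma U_ratio_incr p q : (forall x, 0 < x < PI / 2 -> 0 < G p q x) ->
  strict_incr_on 0 (PI / 2) (U_ratio p q) /\
  filterlim (U_ratio p q) (at_right 0) (locally (1 / 3)).
Proof.
  intros HG. pose proof PI_RGT_0. pose proof (dratio_strict_incr p q HG) as Hm. split.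
  - exact (lhopital_ratio_incr _ _ _ _ _ (sinc_U_derivable p q) (cos_U_derivable q)
             (cos_U_deriv_pos q) Hm (filterlim_sinc_U_0 p) (filterlim_cos_U_0 q)).
  - exact (lhopital_ratio_lim (PI / 2) _ _ _ _ _ ltac:(lra) (sinc_U_derivable p q)
             (cos_U_derivable q) (cos_U_deriv_pos q) Hm (filterlim_sinc_U_0 p)
             (filterlim_cos_U_0 q) (filterlim_dratio_0 p q)).
Qed.

Lemma U_ratio_decr p q : (forall x, 0 < x < PI / 2 -> G p q x < 0) ->
  strict_incr_on 0 (PI / 2) (fun x => - U_ratio p q x) /\
  filterlim (fun x => - U_ratio p q x) (at_right 0) (locally (- (1 / 3))).
Proof.
  intros HG. pose proof PI_RGT_0. pose proof (dratio_strict_decr p q HG) as Hm.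
  assert (Hf : forall y, 0 < y < PI / 2 -> derivable_pt_lim (fun y => - U p (sinc y)) y
                                            (cos_U_deriv q y * - dratio p q y)).
  { intros y Hy. rewrite Ropp_mult_distr_r_reverse.
    now apply derivable_pt_lim_opp, sinc_U_derivable. }
  assert (Hf0 := filterlim_opp_fun _ _ _ (filterlim_sinc_U_0 p)). rewrite Ropp_0 in Hf0.
  assert (Hm0 := filterlim_opp_fun _ _ _ (filterlim_dratio_0 p q)).
  assert (Hdiv : forall x, - U_ratio p q x = - U p (sinc x) / U q (cos x))
    by (intros x; unfold U_ratio, Rdiv; ring).
  split.
  - intros y z Hy Hyz Hz. rewrite !Hdiv.
    exact (lhopital_ratio_incr _ _ _ _ _ Hf (cos_U_derivable q) (cos_U_deriv_pos q) Hm Hf0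
             (filterlim_cos_U_0 q) y z Hy Hyz Hz).
  - apply (filterlim_ext _ _ (fun x => eq_sym (Hdiv x))).
    exact (lhopital_ratio_lim (PI / 2) _ _ _ _ _ ltac:(lra) Hf (cos_U_derivable q)
             (cos_U_deriv_pos q) Hm Hf0 (filterlim_cos_U_0 q) Hm0).
Qed.

Lemma kappa_eq p q : q <> 0 -> kappa p q = U p (2 / PI) / (1 / q).
Proof.
  intros Hq. pose proof PI_RGT_0. unfold kappa, U.
  destruct (Req_EM_T p 0).
  - replace (2 / PI) with (/ (PI / 2)) by (field; lra). rewrite ln_Rinv by lra. field. exact Hq.
  - field. auto.
Qed.

Lemma U_ratio_lim_PI2 p q : 0 < q ->
  filterlim (U_ratio p q) (at_left (PI / 2)) (locally (kappa p q)).
Proof.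
  intros Hq. rewrite kappa_eq by lra.
  apply (filterlim_div_fun (at_left (PI / 2))); [apply Rgt_not_eq, Rdiv_lt_0_compat; lra | |].
  - apply filterlim_sinc_U_PI2.
  - now apply filterlim_cos_U_PI2.
Qed.

Lemma mul_lt_U_iff p q c x : 0 < x < PI / 2 ->
  (c * U q (cos x) < U p (sinc x) <-> c < U_ratio p q x).
Proof.
  intros Hx. pose proof (cos_U_pos q x Hx) as HB.
  replace (U p (sinc x)) with (U_ratio p q x * U q (cos x)) by (unfold U_ratio; field; lra).
  split; intros; nra.
Qed.

Lemma U_lt_mul_iff p q c x : 0 < x < PI / 2 ->
  (U p (sinc x) < c * U q (cos x) <-> U_ratio p q x < c).
Proof.
  intros Hx. pose proof (cos_U_pos q x Hx) as HB.
  replace (U p (sinc x)) with (U_ratio p q x * U q (cos x)) by (unfold U_ratio; field; lra).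
  split; intros; nra.
Qed.

Section UBounds.
Variables p q : R.

Lemma third_lower_of_G_pos : (forall x, 0 < x < PI / 2 -> 0 < G p q x) ->
  (forall x, 0 < x < PI / 2 -> 1 / 3 * U q (cos x) < U p (sinc x)) /\
  (forall c, 1 / 3 < c -> ~ (forall x, 0 < x < PI / 2 -> c * U q (cos x) < U p (sinc x))).
Proof.
  intros HG. pose proof PI_RGT_0. destruct (U_ratio_incr p q HG) as [Hr Hl].
  destruct (strict_incr_lim_right_bounds 0 (PI / 2) _ _ ltac:(lra) Hr Hl) as [Hlow Hsharp].
  split; [intros x Hx; now apply mul_lt_U_iff, Hlow |].
  intros c Hc Hall. destruct (Hsharp c Hc) as [x [Hx Hrx]].
  apply (mul_lt_U_iff p q c x Hx) in Hall; [lra | exact Hx].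
Qed.

Lemma third_upper_of_G_neg : (forall x, 0 < x < PI / 2 -> G p q x < 0) ->
  (forall x, 0 < x < PI / 2 -> U p (sinc x) < 1 / 3 * U q (cos x)) /\
  (forall c, c < 1 / 3 -> ~ (forall x, 0 < x < PI / 2 -> U p (sinc x) < c * U q (cos x))).
Proof.
  intros HG. pose proof PI_RGT_0. destruct (U_ratio_decr p q HG) as [Hr Hl].
  destruct (strict_incr_lim_right_bounds 0 (PI / 2) _ _ ltac:(lra) Hr Hl) as [Hlow Hsharp].
  split; [intros x Hx; apply U_lt_mul_iff; [exact Hx |]; specialize (Hlow x Hx); lra |].
  intros c Hc Hall. destruct (Hsharp (- c) ltac:(lra)) as [x [Hx Hrx]].
  apply (U_lt_mul_iff p q c x Hx) in Hall; [lra | exact Hx].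
Qed.

Lemma kappa_upper_of_G_pos : 0 < q -> (forall x, 0 < x < PI / 2 -> 0 < G p q x) ->
  (forall x, 0 < x < PI / 2 -> U p (sinc x) < kappa p q * U q (cos x)) /\
  (forall c, c < kappa p q -> ~ (forall x, 0 < x < PI / 2 -> U p (sinc x) < c * U q (cos x))).
Proof.
  intros Hq HG. pose proof PI_RGT_0. destruct (U_ratio_incr p q HG) as [Hr _].
  destruct (strict_incr_lim_left_bounds 0 (PI / 2) _ _ ltac:(lra) Hr (U_ratio_lim_PI2 p q Hq))
    as [Hup Hsharp].
  split; [intros x Hx; now apply U_lt_mul_iff, Hup |].
  intros c Hc Hall. destruct (Hsharp c Hc) as [x [Hx Hrx]].
  apply (U_lt_mul_iff p q c x Hx) in Hall; [lra | exact Hx].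
Qed.

Lemma kappa_lower_of_G_neg : 0 < q -> (forall x, 0 < x < PI / 2 -> G p q x < 0) ->
  forall x, 0 < x < PI / 2 -> kappa p q * U q (cos x) < U p (sinc x).
Proof.
  intros Hq HG x Hx. pose proof PI_RGT_0. destruct (U_ratio_decr p q HG) as [Hr _].
  pose proof (filterlim_opp_fun _ _ _ (U_ratio_lim_PI2 p q Hq)) as Hl.
  destruct (strict_incr_lim_left_bounds 0 (PI / 2) _ _ ltac:(lra) Hr Hl) as [Hup _].
  apply mul_lt_U_iff; [exact Hx |]. specialize (Hup x Hx). lra.
Qed.

End UBounds.

(** * Back to powers *)

Lemma pow_bounds_of_U_gt p s a : 0 < s -> a < U p s ->
  (0 < p -> Rpower s p < 1 - p * a) /\ (p = 0 -> s < exp (- a)) /\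
  (p < 0 -> 1 - p * a < Rpower s p).
Proof.
  unfold U. intros Hs. destruct (Req_EM_T p 0) as [-> | Hp]; intros Ha.
  - split; [lra | split; [| lra]]. intros _. rewrite <- (exp_ln s) at 1 by exact Hs.
    apply exp_increasing. lra.
  - replace (Rpower s p) with (1 - p * ((1 - Rpower s p) / p)) by (field; exact Hp).
    split; [| split]; intros; nra.
Qed.

Lemma pow_bounds_of_U_lt p s a : 0 < s -> U p s < a ->
  (0 < p -> 1 - p * a < Rpower s p) /\ (p = 0 -> exp (- a) < s) /\
  (p < 0 -> Rpower s p < 1 - p * a).
Proof.
  unfold U. intros Hs. destruct (Req_EM_T p 0) as [-> | Hp]; intros Ha.
  - split; [lra | split; [| lra]]. intros _. rewrite <- (exp_ln s) at 1 by exact Hs.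
    apply exp_increasing. lra.
  - replace (Rpower s p) with (1 - p * ((1 - Rpower s p) / p)) by (field; exact Hp).
    split; [| split]; intros; nra.
Qed.

Lemma third_bound_eq p q x : third_bound p q x = 1 - p * (1 / 3 * U q (cos x)).
Proof. unfold third_bound, U. destruct (Req_EM_T q 0); field; assumption. Qed.

Lemma third_bound0_eq q x : third_bound0 q x = exp (- (1 / 3 * U q (cos x))).
Proof. unfold third_bound0, U, Rpower. destruct (Req_EM_T q 0); f_equal; field; assumption. Qed.

Lemma kappa_bound_eq p q x : p <> 0 -> q <> 0 ->
  kappa_bound p q x = 1 - p * (kappa p q * U q (cos x)).
Proof.
  intros Hp Hq. unfold kappa_bound, kappa, U.
  destruct (Req_EM_T p 0); [contradiction |]. destruct (Req_EM_T q 0); [contradiction |].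
  field. split; assumption.
Qed.

Lemma kappa_bound0_eq q x : q <> 0 -> kappa_bound0 q x = exp (- (kappa 0 q * U q (cos x))).
Proof.
  intros Hq. pose proof PI_RGT_0. unfold kappa_bound0, kappa, U, Rpower.
  destruct (Req_EM_T 0 0); [| contradiction]. destruct (Req_EM_T q 0); [contradiction |].
  f_equal. replace (2 / PI) with (/ (PI / 2)) by (field; lra). rewrite ln_Rinv by lra.
  field. exact Hq.
Qed.

Section PowerForms.
Variables (p q x : R).
Hypothesis Hx : 0 < x < PI / 2.

Let sinc_x_pos : 0 < sinc x.
Proof. apply sinc_pos. pose proof PI_RGT_0. lra. Qed.

Lemma third_bounds_of_gt : 1 / 3 * U q (cos x) < U p (sinc x) ->
  (0 < p -> Rpower (sinc x) p < third_bound p q x) /\ (p = 0 -> sinc x < third_bound0 q x) /\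
  (p < 0 -> third_bound p q x < Rpower (sinc x) p).
Proof. rewrite third_bound_eq, third_bound0_eq. now apply pow_bounds_of_U_gt. Qed.

Lemma third_bounds_of_lt : U p (sinc x) < 1 / 3 * U q (cos x) ->
  (0 < p -> third_bound p q x < Rpower (sinc x) p) /\ (p = 0 -> third_bound0 q x < sinc x) /\
  (p < 0 -> Rpower (sinc x) p < third_bound p q x).
Proof. rewrite third_bound_eq, third_bound0_eq. now apply pow_bounds_of_U_lt. Qed.

Lemma kappa_bounds_of_lt : q <> 0 -> U p (sinc x) < kappa p q * U q (cos x) ->
  (0 < p -> kappa_bound p q x < Rpower (sinc x) p) /\ (p = 0 -> kappa_bound0 q x < sinc x) /\
  (p < 0 -> Rpower (sinc x) p < kappa_bound p q x).
Proof.
  intros Hq Hlt. destruct (pow_bounds_of_U_lt p (sinc x) _ sinc_x_pos Hlt) as (Hpos & H0 & Hneg).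
  split; [| split]; intros Hp.
  - rewrite kappa_bound_eq by lra. now apply Hpos.
  - subst p. rewrite kappa_bound0_eq by exact Hq. now apply H0.
  - rewrite kappa_bound_eq by lra. now apply Hneg.
Qed.

Lemma kappa_bounds_of_gt : q <> 0 -> kappa p q * U q (cos x) < U p (sinc x) ->
  (0 < p -> Rpower (sinc x) p < kappa_bound p q x) /\ (p = 0 -> sinc x < kappa_bound0 q x) /\
  (p < 0 -> kappa_bound p q x < Rpower (sinc x) p).
Proof.
  intros Hq Hgt. destruct (pow_bounds_of_U_gt p (sinc x) _ sinc_x_pos Hgt) as (Hpos & H0 & Hneg).
  split; [| split]; intros Hp.
  - rewrite kappa_bound_eq by lra. now apply Hpos.
  - subst p. rewrite kappa_bound0_eq by exact Hq. now apply H0.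
  - rewrite kappa_bound_eq by lra. now apply Hneg.
Qed.

End PowerForms.

Theorem theorem1 :
  (* (i) *)
  (forall p q : R, 1 <= q -> p <= 3 * q - 8 / 5 ->
     (forall x : R, 0 < x < PI / 2 ->
        (0 < p -> kappa_bound p q x < Rpower (sinc x) p /\
                  Rpower (sinc x) p < third_bound p q x) /\
        (p = 0 -> kappa_bound0 q x < sinc x /\ sinc x < third_bound0 q x) /\
        (p < 0 -> third_bound p q x < Rpower (sinc x) p /\
                  Rpower (sinc x) p < kappa_bound p q x)) /\
     (forall c : R, 1 / 3 < c ->
        ~ (forall x : R, 0 < x < PI / 2 -> c * U q (cos x) < U p (sinc x))) /\
     (forall c : R, c < kappa p q ->
        ~ (forall x : R, 0 < x < PI / 2 -> U p (sinc x) < c * U q (cos x)))) /\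
  (* (ii) *)
  (forall p q : R, 34 / 35 < q <= 1 -> PI ^ 2 / 4 - 1 <= p ->
     forall x : R, 0 < x < PI / 2 ->
       kappa_bound p q x > Rpower (sinc x) p /\
       Rpower (sinc x) p > third_bound p q x) /\
  (* (iii) *)
  (forall p q : R, 0 < q <= 34 / 35 -> 3 * q - 8 / 5 <= p ->
     forall x : R, 0 < x < PI / 2 ->
        (0 < p -> kappa_bound p q x > Rpower (sinc x) p /\
                  Rpower (sinc x) p > third_bound p q x) /\
        (p = 0 -> kappa_bound0 q x > sinc x /\ sinc x > third_bound0 q x) /\
        (p < 0 -> third_bound p q x > Rpower (sinc x) p /\
                  Rpower (sinc x) p > kappa_bound p q x)) /\
  (* (iv) *)
  (forall p q : R, q <= 0 -> 3 * q - 8 / 5 <= p ->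
     (forall x : R, 0 < x < PI / 2 ->
        (0 < p -> Rpower (sinc x) p > third_bound p q x) /\
        (p = 0 -> sinc x > third_bound0 q x) /\
        (p < 0 -> Rpower (sinc x) p < third_bound p q x)) /\
     (forall c : R, c < 1 / 3 ->
        ~ (forall x : R, 0 < x < PI / 2 -> U p (sinc x) < c * U q (cos x)))).
Proof.
  unfold Rgt. split; [| split; [| split]].
  - intros p q Hq Hp.
    assert (HG : forall x, 0 < x < PI / 2 -> 0 < G p q x) by (intros; now apply G_pos).
    destruct (third_lower_of_G_pos p q HG) as [Hlo Hlo_sharp].
    destruct (kappa_upper_of_G_pos p q ltac:(lra) HG) as [Hhi Hhi_sharp].
    split; [intros x Hx | tauto].
    pose proof (third_bounds_of_gt p q x Hx (Hlo x Hx)).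
    pose proof (kappa_bounds_of_lt p q x Hx ltac:(lra) (Hhi x Hx)). tauto.
  - intros p q Hq Hp x Hx.
    assert (HG : forall x, 0 < x < PI / 2 -> G p q x < 0) by (intros; apply G_neg_large_p; lra).
    assert (0 < p) by (pose proof PI2_3_2; nra).
    pose proof (third_bounds_of_lt p q x Hx (proj1 (third_upper_of_G_neg p q HG) x Hx)).
    pose proof (kappa_lower_of_G_neg p q ltac:(lra) HG x Hx) as Hhi.
    pose proof (kappa_bounds_of_gt p q x Hx ltac:(lra) Hhi).
    tauto.
  - intros p q Hq Hp x Hx.
    assert (HG : forall x, 0 < x < PI / 2 -> G p q x < 0) by (intros; apply G_neg_small_q; lra).
    pose proof (third_bounds_of_lt p q x Hx (proj1 (third_upper_of_G_neg p q HG) x Hx)).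
    pose proof (kappa_lower_of_G_neg p q ltac:(lra) HG x Hx) as Hhi.
    pose proof (kappa_bounds_of_gt p q x Hx ltac:(lra) Hhi).
    tauto.
  - intros p q Hq Hp.
    assert (HG : forall x, 0 < x < PI / 2 -> G p q x < 0) by (intros; apply G_neg_small_q; lra).
    destruct (third_upper_of_G_neg p q HG) as [Hup Hsharp].
    split; [intros x Hx | exact Hsharp].
    pose proof (third_bounds_of_lt p q x Hx (Hup x Hx)). tauto.
Qed.
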